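(* Let $\Omega$ be a finite set, $K\ge1$, $A$ a symmetric real $|\Omega|\times|\Omega|$ matrix, $w\in\mathbb{R}^{\Omega}$ with $w_p>0$ for all $p$, and $W=\mathrm{diag}(w)$. For nonzero $X\in\{0,1\}^{\Omega}$ let $e(X)=-\frac{X'AX}{w'X}$ and $\nabla e(X)=w\frac{X'AX}{(w'X)^2}-AX\frac{2}{w'X}$. For labelings $S:\Omega\to\{1,\dots,K\}$ with all segments $S^k$ (identified with indicator vectors) nonempty let $E_A(S)=\sum_k e(S^k)$. Fix such a labeling $S_t$ and for $\delta\in\mathbb{R}$ define $$B_t(S,\delta)=\sum_{k}\nabla e(S^k_t)'S^k+\delta\sum_k\frac{(\mathbf{1}-2S^k_t)'WS^k}{w'S^k_t}.$$ Then for every $\delta\ge-\lambda_0(W^{-1/2}AW^{-1/2})$, where $\lambda_0$ denotes the smallest eigenvalue, $B_t(\cdot,\delta)+K\delta$ is an auxiliary function for $E_A$ at $S_t$; in particular $\{B_t(\cdot,\delta)+K\delta\}_{\delta\in\mathbb{R}}$ is a pseudo-bound for $E_A$ at $S_t$. Moreover, for any factors $c\in\mathcal{F}$ (subsets of $\Omega$), arbitrary real potentials $E_c(S_c)$ and $\gamma\in\mathbb{R}$, the same holds for $B_t(S,\delta)+K\delta+\gamma\sum_{c\in\mathcal{F}}E_c(S_c)$ with respect to the joint energy $E_A(S)+\gamma\sum_{c\in\mathcal{F}}E_c(S_c)$.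
   Context: An auxiliary function for $E$ at $S_t$ is a function $a$ with $E(S)\le a(S)$ for all admissible $S$ and $E(S_t)=a(S_t)$. A family $B(S,\delta)$ indexed by a real parameter $\delta$ is a pseudo-bound for $E$ at $S_t$ if there is at least one $\delta'$ for which $B(\cdot,\delta')$ is an auxiliary function for $E$ at $S_t$. $\mathbf{1}$ is the all-ones vector. *)

From HB Require Import structures.
From mathcomp Require Import all_boot all_order all_algebra.
From mathcomp Require Import reals.
Set Implicit Arguments. Unset Strict Implicit. Unset Printing Implicit Defensive.
Import Order.TTheory GRing.Theory Num.Theory.
Local Open Scope ring_scope.

Section Defs.
Variables (R : realType) (n K : nat).

Definition labeling := 'I_n -> 'I_K.

Definition admissible (S : labeling) : Prop := forall k : 'I_K, exists i, S i = k.

Definition seg (S : labeling) (k : 'I_K) : 'cV[R]_n :=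
  \col_i (S i == k)%:R.

Definition sc (M : 'M[R]_1) : R := M 0 0.

Definition e_fun (A : 'M[R]_n) (w X : 'cV[R]_n) : R :=
  - sc (X^T *m A *m X) / sc (w^T *m X).

Definition grad_e (A : 'M[R]_n) (w X : 'cV[R]_n) : 'cV[R]_n :=
  (sc (X^T *m A *m X) / (sc (w^T *m X)) ^+ 2) *: w
  - (2 / sc (w^T *m X)) *: (A *m X).

Definition E_A (A : 'M[R]_n) (w : 'cV[R]_n) (S : labeling) : R :=
  \sum_(k < K) e_fun A w (seg S k).

Definition Wmat (w : 'cV[R]_n) : 'M[R]_n := diag_mx (w^T).

Definition Wmhalf (w : 'cV[R]_n) : 'M[R]_n := diag_mx (\row_i (Num.sqrt (w i 0))^-1).

Definition const1 : 'cV[R]_n := const_mx 1.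

Definition B_t (A : 'M[R]_n) (w : 'cV[R]_n) (St S : labeling) (delta : R) : R :=
  \sum_(k < K) sc ((grad_e A w (seg St k))^T *m seg S k)
  + delta * \sum_(k < K)
      sc ((const1 - 2 *: seg St k)^T *m Wmat w *m seg S k) / sc (w^T *m seg St k).

Definition smallest_eigenvalue (M : 'M[R]_n) (l : R) : Prop :=
  eigenvalue M l /\ forall a, eigenvalue M a -> l <= a.

Definition auxiliary (E a : labeling -> R) (St : labeling) : Prop :=
  (forall S, admissible S -> E S <= a S) /\ E St = a St.

Definition pseudo_bound (E : labeling -> R) (B : labeling -> R -> R) (St : labeling) : Prop :=
  exists d, auxiliary E (fun S => B S d) St.

Definition restr (S : labeling) (c : {set 'I_n}) : {x : 'I_n | x \in c} -> 'I_K :=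
  fun x => S (proj1_sig x).

End Defs.

Arguments restr {n K} S c _.
Arguments seg {R n K} S k.
Arguments E_A {R n K} A w S.
Arguments B_t {R n K} A w St S delta.
Arguments auxiliary {R n K} E a St.
Arguments pseudo_bound {R n K} E B St.
Arguments smallest_eigenvalue {R n} M l.
Arguments Wmhalf {R n} w.
Arguments admissible {n K} S.

From HB Require Import structures.
From mathcomp Require Import all_boot all_order all_algebra.
From mathcomp Require Import reals complex ring lra.
Set Implicit Arguments. Unset Strict Implicit. Unset Printing Implicit Defensive.
Import Order.TTheory GRing.Theory Num.Theory.
Local Open Scope ring_scope.

(** For binary vectors X, T with w'X = b, w'T = a, the per-segment gap
    ∇e(T)'X + δ (1 - 2T)'WX / a + δ - e(X) equals b (u'Au + δ u'Wu) with
    u = X/b - T/a.  Writing u = W^{-1/2} v, the Rayleigh bound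
    v'(W^{-1/2} A W^{-1/2})v >= λ0 |v|^2 makes the gap nonnegative as soon as
    δ >= -λ0, and the gap vanishes at X = T because then u = 0.  Summing over
    the K segments gives the auxiliary-function property; any added potential
    appears on both sides and cancels. *)

Section DiagonalForms.
Variables (C : numClosedFieldType) (n : nat).

Lemma norm_quadE (y : 'rV[C]_n) :
  (y *m map_mx Num.conj y^T) 0 0 = \sum_i `|y 0 i| ^+ 2.
Proof. by rewrite mxE; apply: eq_bigr => i _; rewrite !mxE normCK. Qed.

Lemma diag_quadE (y d : 'rV[C]_n) :
  (y *m diag_mx d *m map_mx Num.conj y^T) 0 0 = \sum_i d 0 i * (`|y 0 i| ^+ 2).
Proof.
by rewrite mxE; apply: eq_bigr => i _; rewrite mul_mx_diag !mxE normCK mulrAC mulrC.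
Qed.

End DiagonalForms.

Section RealSpectrum.
Variables (R : realType) (n : nat).
Local Notation toC := (real_complex R).

(* The spectral theorem is only available over a numClosedFieldType, so the
   eigenvalues of a real symmetric matrix are read off the diagonal of the
   spectral decomposition of its image in R[i]. *)
Definition real_spectrum (M : 'M[R]_n) (i : 'I_n) : R :=
  complex.Re (spectral_diag (map_mx toC M) 0 i).

Lemma map_real_sym_hermsym (M : 'M[R]_n) : M^T = M -> map_mx toC M \is hermsymmx.
Proof.
move=> sM; apply: realsym_hermsym.
  by apply/is_hermitianmxP; rewrite expr0 scale1r map_mx_id // map_trmx sM.
by apply/mxOverP => i j; rewrite mxE; apply/complex_realP; exists (M i j).
Qed.

Section Symmetric.
Variables (M : 'M[R]_n).
Hypothesis sM : M^T = M.
Let P := spectralmx (map_mx toC M).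
Let d := spectral_diag (map_mx toC M).

Lemma spectral_diag_realE i : d 0 i = ((real_spectrum M i)%:C)%C.
Proof.
have /mxOverP/(_ 0 i) := hermitian_spectral_diag_real (map_real_sym_hermsym sM).
by move=> /RRe_real ->.
Qed.

Lemma spectral_decomposition : map_mx toC M = map_mx Num.conj P^T *m diag_mx d *m P.
Proof.
have /orthomx_spectralP -> := hermitian_normalmx (map_real_sym_hermsym sM).
by rewrite invmx_unitary // spectral_unitarymx.
Qed.

Lemma real_spectrum_eigenvalue i : eigenvalue M (real_spectrum M i).
Proof.
rewrite eigenvalue_root_char -(fmorph_root toC) map_char_poly -eigenvalue_root_char.
rewrite [X in eigenvalue _ X](_ : _ = d 0 i); last by rewrite spectral_diag_realE.
have /unitarymxP PP : P \is unitarymx := spectral_unitarymx _.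
apply/eigenvalueP; exists (row i P).
  rewrite -row_mul spectral_decomposition !mulmxA PP mul1mx row_mul row_diag_mx.
  by rewrite -scalemxAl -rowE.
apply/eqP => P_i0.
have : row i (P *m map_mx Num.conj P^T) = 0 by rewrite row_mul P_i0 mul0mx.
by rewrite PP => /rowP/(_ i); rewrite !mxE eqxx => /eqP; rewrite oner_eq0.
Qed.

Lemma quad_ge_spectrum_lb (l : R) : (forall i, l <= real_spectrum M i) ->
  forall r : 'rV[R]_n, l * (r *m r^T) 0 0 <= (r *m M *m r^T) 0 0.
Proof.
move=> hl r; rewrite -(lecR (R:=R)).
have -> : ((l * (r *m r^T) 0 0)%:C)%C = toC l * (map_mx toC (r *m r^T)) 0 0.
  by rewrite [X in _ = _ * X]mxE rmorphM.
have -> : (((r *m M *m r^T) 0 0)%:C)%C = (map_mx toC (r *m M *m r^T)) 0 0.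
  by rewrite [RHS]mxE.
have rT : map_mx toC r^T = map_mx Num.conj (map_mx toC r)^T.
  by apply/matrixP=> i j; rewrite !mxE; symmetry; apply: conjc_real.
rewrite !map_mxM rT spectral_decomposition.
set y := map_mx toC r *m map_mx Num.conj P^T.
have yT : map_mx Num.conj y^T = P *m map_mx Num.conj (map_mx toC r)^T.
  by rewrite /y trmx_mul map_mxM trmxCK.
have P_unitary : P \is unitarymx := spectral_unitarymx _.
have -> : map_mx toC r *m map_mx Num.conj (map_mx toC r)^T = y *m map_mx Num.conj y^T.
  by rewrite yT /y mulmxA mulmxKtV.
have -> : map_mx toC r *m (map_mx Num.conj P^T *m diag_mx d *m P) *m
            map_mx Num.conj (map_mx toC r)^T = y *m diag_mx d *m map_mx Num.conj y^T.
  by rewrite yT /y !mulmxA.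
rewrite diag_quadE norm_quadE mulr_sumr; apply: ler_sum => i _.
by rewrite spectral_diag_realE ler_wpM2r ?lecR // exprn_ge0.
Qed.

End Symmetric.

Lemma real_spectrum_bounded (M : 'M[R]_n) : exists l : R, forall i, l <= real_spectrum M i.
Proof.
exists (- \sum_i `|real_spectrum M i|) => i.
rewrite (bigD1 i) //= opprD.
have := ler_norm (- real_spectrum M i); rewrite normrN.
have : 0 <= \sum_(j | j != i) `|real_spectrum M j| by apply: sumr_ge0.
lra.
Qed.
End RealSpectrum.

Section SegmentBound.
Variables (R : realType) (n : nat) (A : 'M[R]_n) (w : 'cV[R]_n).
Hypothesis sA : A^T = A.
Hypothesis w_gt0 : forall i, 0 < w i 0.

Definition bil (x y : 'cV[R]_n) : R := sc (x^T *m A *m y).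

Lemma sc_tr (M : 'M[R]_1) : sc M^T = sc M.
Proof. by rewrite /sc mxE. Qed.

Lemma sc_dotE (x y : 'cV[R]_n) : sc (x^T *m y) = \sum_i x i 0 * y i 0.
Proof. by rewrite /sc mxE; apply: eq_bigr => i _; rewrite mxE. Qed.

Lemma sc_WmatE (x y : 'cV[R]_n) : sc (x^T *m Wmat w *m y) = \sum_i x i 0 * w i 0 * y i 0.
Proof. by rewrite /sc /Wmat mxE; apply: eq_bigr => i _; rewrite mul_mx_diag !mxE. Qed.

Lemma bilC x y : bil x y = bil y x.
Proof. by rewrite /bil -sc_tr !trmx_mul sA trmxK mulmxA. Qed.

Lemma bilDl x y z : bil (x + y) z = bil x z + bil y z.
Proof. by rewrite /bil linearD /= !mulmxDl /sc mxE. Qed.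

Lemma bilZl a x z : bil (a *: x) z = a * bil x z.
Proof. by rewrite /bil linearZ /= -!scalemxAl /sc mxE. Qed.

Lemma bil_combE (a b : R) (x y : 'cV[R]_n) :
  bil (a *: x - b *: y) (a *: x - b *: y) =
  a ^+ 2 * bil x x - 2 * a * b * bil y x + b ^+ 2 * bil y y.
Proof.
rewrite -scaleNr !bilDl ![bil _ (_ + _)]bilC !bilDl !bilZl ![bil _ (_ *: _)]bilC !bilZl.
rewrite (bilC x y); ring.
Qed.

Lemma grad_e_dotE (t x : 'cV[R]_n) :
  sc ((grad_e A w t)^T *m x) =
  bil t t / sc (w^T *m t) ^+ 2 * sc (w^T *m x) - 2 / sc (w^T *m t) * bil t x.
Proof.
rewrite /grad_e /bil linearB /= !linearZ /= mulmxDl -!scalemxAl mulNmx trmx_mul sA.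
by rewrite /sc !mxE mulrN.
Qed.

Lemma weighted_rayleigh (l : R) :
  (forall i, l <= real_spectrum (Wmhalf w *m A *m Wmhalf w) i) ->
  forall u : 'cV[R]_n, l * sc (u^T *m Wmat w *m u) <= bil u u.
Proof.
move=> hl u; set Wh := Wmhalf w.
have sWh : Wh^T = Wh by rewrite /Wh /Wmhalf tr_diag_mx.
have sM : (Wh *m A *m Wh)^T = Wh *m A *m Wh by rewrite !trmx_mul sWh sA mulmxA.
pose r : 'rV[R]_n := \row_i (Num.sqrt (w i 0) * u i 0).
have rWh : r *m Wh = u^T.
  apply/rowP => j; rewrite mul_mx_diag !mxE mulrAC mulfV ?mul1r //.
  by rewrite gt_eqF // sqrtr_gt0.
have Whr : Wh *m r^T = u by rewrite -[LHS]trmxK trmx_mul sWh trmxK rWh trmxK.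
have := quad_ge_spectrum_lb sM hl r.
rewrite -!mulmxA Whr !mulmxA rWh; suff -> : (r *m r^T) 0 0 = sc (u^T *m Wmat w *m u) by [].
rewrite sc_WmatE mxE; apply: eq_bigr => i _; rewrite !mxE.
rewrite mulrACA -expr2 sqr_sqrtr; last exact: ltW.
by rewrite mulrCA mulrA.
Qed.

Lemma sc_Wmat_ge0 (u : 'cV[R]_n) : 0 <= sc (u^T *m Wmat w *m u).
Proof.
rewrite sc_WmatE; apply: sumr_ge0 => i _.
by rewrite mulrAC -expr2 mulr_ge0 ?sqr_ge0 ?ltW.
Qed.

Section Binary.
Variables (x t : 'cV[R]_n).
Hypothesis x_bin : forall i, x i 0 * x i 0 = x i 0.
Hypothesis t_bin : forall i, t i 0 * t i 0 = t i 0.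
Hypothesis wx_neq0 : sc (w^T *m x) != 0.
Hypothesis wt_neq0 : sc (w^T *m t) != 0.

Let a := sc (w^T *m t).
Let b := sc (w^T *m x).
Let c := \sum_i t i 0 * w i 0 * x i 0.

Lemma segment_gapE (delta : R) :
  let u := b^-1 *: x - a^-1 *: t in
  sc ((grad_e A w t)^T *m x)
    + delta * (sc ((const1 R n - 2 *: t)^T *m Wmat w *m x) / a) + delta - e_fun A w x
  = b * (bil u u + delta * sc (u^T *m Wmat w *m u)).
Proof.
move=> u.
have a_neq0 : a != 0 := wt_neq0.
have b_neq0 : b != 0 := wx_neq0.
have cross : sc ((const1 R n - 2 *: t)^T *m Wmat w *m x) = b - 2 * c.
  rewrite sc_WmatE /b sc_dotE /c mulr_sumr -sumrB; apply: eq_bigr => i _.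
  rewrite !mxE; ring.
have uWu : sc (u^T *m Wmat w *m u) = b^-1 - 2 * c / (a * b) + a^-1.
  transitivity (b^-1 ^+ 2 * \sum_i w i 0 * x i 0 - 2 / (a * b) * c
                + a^-1 ^+ 2 * \sum_i w i 0 * t i 0); last first.
    by rewrite -!sc_dotE -/a -/b; field; rewrite a_neq0 b_neq0.
  rewrite sc_WmatE /c !mulr_sumr -sumrB -big_split /=; apply: eq_bigr => i _.
  rewrite !mxE; transitivity (b^-1 ^+ 2 * (w i 0 * (x i 0 * x i 0))
    - 2 / (a * b) * (t i 0 * w i 0 * x i 0) + a^-1 ^+ 2 * (w i 0 * (t i 0 * t i 0))).
    by field; rewrite a_neq0 b_neq0.
  by rewrite x_bin t_bin.
rewrite cross uWu bil_combE grad_e_dotE /e_fun -/(bil x x) -/a -/b.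
by field; rewrite a_neq0 b_neq0.
Qed.

Lemma segment_bound (l delta : R) :
  (forall i, l <= real_spectrum (Wmhalf w *m A *m Wmhalf w) i) -> - l <= delta ->
  0 < b ->
  e_fun A w x <= sc ((grad_e A w t)^T *m x)
    + delta * (sc ((const1 R n - 2 *: t)^T *m Wmat w *m x) / a) + delta.
Proof.
move=> hl hdelta b_gt0; rewrite -subr_ge0 segment_gapE.
set u := _ - _; apply: mulr_ge0; first exact: ltW.
have := weighted_rayleigh hl u; have := sc_Wmat_ge0 u; nra.
Qed.

End Binary.

Lemma segment_bound_eq (t : 'cV[R]_n) (delta : R) :
  (forall i, t i 0 * t i 0 = t i 0) -> sc (w^T *m t) != 0 ->
  e_fun A w t = sc ((grad_e A w t)^T *m t)
    + delta * (sc ((const1 R n - 2 *: t)^T *m Wmat w *m t) / sc (w^T *m t)) + delta.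
Proof.
move=> t_bin wt_neq0; apply/eqP; rewrite eq_sym -subr_eq0.
by rewrite segment_gapE // subrr /bil /sc !(trmx0, mul0mx, mulmx0) !mxE mulr0 addr0 mulr0.
Qed.

End SegmentBound.

Section Labelings.
Variables (R : realType) (n K : nat) (A : 'M[R]_n) (w : 'cV[R]_n).
Hypothesis sA : A^T = A.
Hypothesis w_gt0 : forall i, 0 < w i 0.

Lemma seg_bin (S : labeling n K) k i : seg S k i 0 * seg S k i 0 = seg S k i 0 :> R.
Proof. by rewrite /seg !mxE; case: (S i == k); rewrite ?mulr1 ?mulr0. Qed.

Lemma seg_weight_gt0 (S : labeling n K) k : admissible S -> 0 < sc (w^T *m seg S k).
Proof.
move=> /(_ k) [i Si]; rewrite sc_dotE (bigD1 i) //= /seg !mxE Si eqxx mulr1.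
apply: ltr_pwDl; first exact: w_gt0.
apply: sumr_ge0 => j _; rewrite mxE; apply: mulr_ge0; first exact: ltW.
by case: (S j == k).
Qed.

Lemma B_t_auxiliary (l delta : R) (St : labeling n K) :
  (forall i, l <= real_spectrum (Wmhalf w *m A *m Wmhalf w) i) -> - l <= delta ->
  admissible St ->
  auxiliary (E_A A w) (fun S => B_t A w St S delta + K%:R * delta) St.
Proof.
move=> hl hdelta St_adm.
have Kdelta : K%:R * delta = \sum_(k < K) delta by rewrite sumr_const card_ord mulr_natl.
have seg_neq0 (S : labeling n K) k : admissible S -> sc (w^T *m seg S k) != 0.
  by move=> S_adm; apply/lt0r_neq0/seg_weight_gt0.
split => [S S_adm|]; rewrite /E_A /B_t Kdelta mulr_sumr -!big_split /=.
  apply: ler_sum => k _.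
  apply: (segment_bound sA w_gt0 (seg_bin _ _) (seg_bin _ _) _ _ hl hdelta).
  - exact: seg_neq0.
  - exact: seg_neq0.
  - exact: seg_weight_gt0.
apply: eq_bigr => k _.
by apply: (segment_bound_eq sA); [exact: seg_bin | exact: seg_neq0].
Qed.

End Labelings.

Lemma auxiliary_addr (R : realType) n K (E a f : labeling n K -> R) St :
  auxiliary E a St -> auxiliary (fun S => E S + f S) (fun S => a S + f S) St.
Proof. by move=> [Ea EaSt]; split => [S /Ea|]; rewrite ?lerD2r // EaSt. Qed.

Theorem theorem4 (R : realType) (n K : nat) (A : 'M[R]_n) (w : 'cV[R]_n)
  (St : labeling n K) :
  (0 < K)%N -> A^T = A -> (forall i, 0 < w i 0) -> admissible St ->
  (forall (delta l0 : R),
     smallest_eigenvalue (Wmhalf w *m A *m Wmhalf w) l0 -> - l0 <= delta ->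
     auxiliary (E_A A w) (fun S => B_t A w St S delta + K%:R * delta) St)
  /\ pseudo_bound (E_A A w) (fun S delta => B_t A w St S delta + K%:R * delta) St
  /\ (forall (F : {set {set 'I_n}})
             (Ec : forall c : {set 'I_n}, ({x : 'I_n | x \in c} -> 'I_K) -> R)
             (gamma : R),
        let E := fun S => E_A A w S + gamma * \sum_(c in F) Ec c (restr S c) in
        (forall (delta l0 : R),
           smallest_eigenvalue (Wmhalf w *m A *m Wmhalf w) l0 -> - l0 <= delta ->
           auxiliary E (fun S => B_t A w St S delta + K%:R * delta
                                 + gamma * \sum_(c in F) Ec c (restr S c)) St)
        /\ pseudo_bound E (fun S delta => B_t A w St S delta + K%:R * delta
                                 + gamma * \sum_(c in F) Ec c (restr S c)) St).
Proof.
move=> _ sA w_gt0 St_adm.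
have sM : (Wmhalf w *m A *m Wmhalf w)^T = Wmhalf w *m A *m Wmhalf w.
  by rewrite !trmx_mul /Wmhalf tr_diag_mx sA mulmxA.
have aux_eig delta l0 : smallest_eigenvalue (Wmhalf w *m A *m Wmhalf w) l0 ->
    - l0 <= delta ->
    auxiliary (E_A A w) (fun S => B_t A w St S delta + K%:R * delta) St.
  move=> [_ l0_min] hdelta; apply: (B_t_auxiliary sA w_gt0 _ hdelta St_adm) => i.
  exact/l0_min/real_spectrum_eigenvalue.
have [l hl] := real_spectrum_bounded (Wmhalf w *m A *m Wmhalf w).
have pseudo : pseudo_bound (E_A A w)
    (fun S delta => B_t A w St S delta + K%:R * delta) St.
  by exists (- l); apply: (B_t_auxiliary sA w_gt0 hl _ St_adm).
split; first exact: aux_eig.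
split; first exact: pseudo.
move=> F Ec gamma E; split.
  by move=> delta l0 hl0 hdelta; apply/auxiliary_addr/(aux_eig _ _ hl0 hdelta).
by have [d hd] := pseudo; exists d; apply: auxiliary_addr.
Qed.
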